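(* Let $\mathcal{K}\subset L^2(G)$ be a reproducing kernel Hilbert space, let $\Lambda$ be a relatively separated family in $G$, and let $(g_\lambda)_{\lambda\in\Lambda}$ be a system of $w$-molecules in $\mathcal{K}$ for some admissible weight $w$. Then $(g_\lambda)_{\lambda\in\Lambda}$ is a Bessel sequence in $\mathcal{K}$, i.e. there is $B>0$ with $\sum_{\lambda}|\langle f,g_\lambda\rangle|^2\le B\|f\|^2$ for all $f\in\mathcal{K}$.
   Context: $G$ is a $\sigma$-compact locally compact group with left Haar measure $\mu_G$; $Q$ a fixed symmetric open relatively compact neighborhood of $e$. $M_Qf(x)=\operatorname{ess\,sup}_{y\in xQ}|f(y)|$, $M_Q^Rf(x)=\operatorname{ess\,sup}_{y\in Qx}|f(y)|$. Admissible weight: measurable submultiplicative $w:G\to[1,\infty)$. $\mathcal{W}_w(G)=\{f\in C(G): w\cdot M_Q^RM_Qf\in L^1(G)\}$. RKHS: closed separable subspace of $L^2(G)$ with bounded point evaluations. A family $\Lambda$ is relatively separated if $\sup_x\#(\Lambda\cap xQ)<\infty$. A system of $w$-molecules is a family $(g_\lambda)_{\lambda\in\Lambda}$ in $\mathcal{K}$ with $|g_\lambda(x)|\le\min\{\Phi(\lambda^{-1}x),\Phi(x^{-1}\lambda)\}$ for all $x,\lambda$, for some non-negative $\Phi\in\mathcal{W}_w(G)$. *)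

From HB Require Import structures.
From mathcomp Require Import all_boot all_order all_algebra.
From mathcomp Require Import all_classical all_reals all_analysis.
From mathcomp Require Import measurable_realfun.
From mathcomp Require complex.
Import complex.ComplexField.
Set Implicit Arguments. Unset Strict Implicit. Unset Printing Implicit Defensive.
Import Order.TTheory GRing.Theory Num.Theory numFieldNormedType.Exports.
Local Open Scope classical_set_scope.
Local Open Scope ring_scope.

Notation Borel G := (g_sigma_algebraType (@open G)).

Notation Cx R := (complex.complex R).
Definition csq {R : realType} (z : Cx R) : R :=
  complex.Re z ^+ 2 + complex.Im z ^+ 2.
Definition cabs {R : realType} (z : Cx R) : R := Num.sqrt (csq z).

Section Defs.
Context {R : realType} {G : ptopologicalType}.
Variables (mul : G -> G -> G) (inv : G -> G) (e : G).

Record is_sc_lc_group : Prop := {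
  lcg_mulA : forall x y z, mul x (mul y z) = mul (mul x y) z;
  lcg_mul1 : forall x, mul e x = x;
  lcg_mul1r : forall x, mul x e = x;
  lcg_mulV : forall x, mul (inv x) x = e;
  lcg_mulVr : forall x, mul x (inv x) = e;
  lcg_cont_mul : continuous (fun p : G * G => mul p.1 p.2);
  lcg_cont_inv : continuous inv;
  lcg_hausdorff : hausdorff_space G;
  lcg_loc_compact : forall x : G, exists2 U : set G, nbhs x U & compact U;
  lcg_sigma_compact : exists K : nat -> set G,
      (forall n, compact (K n)) /\ \bigcup_n K n = setT }.

Variable mu : {measure set (Borel G) -> \bar R}.

Record is_left_haar : Prop := {
  haar_left_inv : forall (x : G) (A : set (Borel G)),
      measurable A -> mu (mul x @` A) = mu A;
  haar_compact_finite : forall K : set G, compact K -> (mu K < +oo)%E;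
  haar_open_pos : forall U : set G, open U -> U !=set0 -> (0 < mu U)%E;
  haar_outer_regular : forall A : set (Borel G), measurable A ->
      mu A = ereal_inf [set mu U | U in [set U : set G | open U /\ A `<=` U]];
  haar_inner_regular : forall U : set G, open U ->
      mu U = ereal_sup [set mu K | K in [set K : set G | compact K /\ K `<=` U]] }.

Definition is_window (Q : set G) : Prop :=
  [/\ open Q, Q e, inv @` Q = Q & compact (closure Q)].

Definition loc_esssup (A : set G) (F : G -> \bar R) : \bar R :=
  ereal_inf [set M : \bar R | mu (A `&` [set y | (M < F y)%E]) = 0%E].

Definition maxQ (Q : set G) (f : G -> R) : G -> \bar R :=
  fun x => loc_esssup (mul x @` Q) (fun y => (`|f y|)%:E).
Definition maxQR (Q : set G) (F : G -> \bar R) : G -> \bar R :=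
  fun x => loc_esssup ((fun q => mul q x) @` Q) F.

Definition admissible_weight (w : G -> R) : Prop :=
  [/\ measurable_fun (setT : set (Borel G)) w,
      forall x, 1 <= w x &
      forall x y, w (mul x y) <= w x * w y].

Definition in_Wiener (Q : set G) (w : G -> R) (f : G -> R) : Prop :=
  [/\ continuous f,
      measurable_fun (setT : set (Borel G))
        (fun x => ((w x)%:E * maxQR Q (maxQ Q f) x)%E) &
      (\int[mu]_x ((w x)%:E * maxQR Q (maxQ Q f) x) < +oo)%E].

Definition l2sq (f : G -> Cx R) : \bar R := (\int[mu]_x (csq (f x))%:E)%E.
Definition in_L2 (f : G -> Cx R) : Prop :=
  [/\ measurable_fun (setT : set (Borel G)) (fun x => complex.Re (f x)),
      measurable_fun (setT : set (Borel G)) (fun x => complex.Im (f x)) &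
      (l2sq f < +oo)%E].
(* <f, g> = \int f conj(g) *)
Definition ip (f g : G -> Cx R) : Cx R :=
  complex.Complex
    (Rintegral mu setT (fun x => complex.Re (f x) * complex.Re (g x)
                                 + complex.Im (f x) * complex.Im (g x)))
    (Rintegral mu setT (fun x => complex.Im (f x) * complex.Re (g x)
                                 - complex.Re (f x) * complex.Im (g x))).

Record is_RKHS (K : set (G -> Cx R)) : Prop := {
  rkhs_sub_L2 : K `<=` in_L2;
  rkhs_zero : K (fun _ => 0);
  rkhs_add : forall f g, K f -> K g -> K (fun x => f x + g x);
  rkhs_scale : forall (c : Cx R) f, K f -> K (fun x => c * f x);
  rkhs_closed : forall (u : nat -> G -> Cx R) (g : G -> Cx R),
      (forall n, K (u n)) -> in_L2 g ->
      l2sq (fun x => u n x - g x) @[n --> \oo] --> 0%E ->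
      exists2 f, K f & {ae mu, forall x, f x = g x};
  rkhs_separable : exists2 D : set (G -> Cx R), countable D /\ D `<=` K &
      forall f, K f -> forall eps : R, 0 < eps ->
        exists2 h, D h & (l2sq (fun x => (f x - h x)%R) < eps%:E)%E;
  rkhs_point_eval : forall x : G, exists C : R, forall f, K f ->
      cabs (f x) <= C * Num.sqrt (fine (l2sq f)) }.

Definition rel_separated {I : Type} (Q : set G) (Lam : I -> G) : Prop :=
  exists N : nat, forall x : G,
    ([set i | (mul x @` Q) (Lam i)] #<= [set: 'I_N])%card.

Definition w_molecules {I : Type} (K : set (G -> Cx R)) (Q : set G)
    (w : G -> R) (Lam : I -> G) (g : I -> G -> Cx R) : Prop :=
  (forall i, K (g i)) /\
  exists Phi : G -> R, [/\ forall x, 0 <= Phi x, in_Wiener Q w Phi &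
    forall i x, cabs (g i x) <= Num.min (Phi (mul (inv (Lam i)) x))
                                        (Phi (mul (inv x) (Lam i)))].

End Defs.

From HB Require Import structures.
From mathcomp Require Import all_boot all_order all_algebra.
From mathcomp Require Import all_classical all_reals all_analysis.
From mathcomp Require Import measurable_realfun.
From mathcomp Require Import ring lra.
From mathcomp Require complex.
Import complex.ComplexField.
Import Order.TTheory GRing.Theory Num.Theory numFieldNormedType.Exports.
Local Open Scope classical_set_scope.
Local Open Scope ring_scope.

(* Schur's test.  Let H := M_Q Phi.  For z in Lam_i Q, symmetry of Q gives
   Phi(x^-1 Lam_i) <= H(x^-1 z); averaging over Lam_i Q and using that these
   sets overlap at most N times yields sum_i Phi(x^-1 Lam_i) <= N ||H||_1 / mu(Q)
   for every x, while left invariance gives \int Phi(Lam_i^-1 x) dx <= ||H||_1.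
   Finally ||H||_1 <= ||w M^R_Q H||_1 < oo since H <= M^R_Q H and w >= 1.  So the
   kernel |g_i(x)| has uniformly bounded row sums and column integrals, and
   Cauchy-Schwarz, |<f, g_i>|^2 <= (\int |g_i|) (\int |f|^2 |g_i|), summed over i,
   gives the Bessel bound. *)

Section group_translations.
Context {G : ptopologicalType} {mul : G -> G -> G} {inv : G -> G} {e : G}.
Hypothesis HG : is_sc_lc_group mul inv e.

Lemma lcg_mulKg x y : mul (inv x) (mul x y) = y.
Proof. by rewrite (lcg_mulA HG) (lcg_mulV HG) (lcg_mul1 HG). Qed.

Lemma lcg_mulKVg x y : mul x (mul (inv x) y) = y.
Proof. by rewrite (lcg_mulA HG) (lcg_mulVr HG) (lcg_mul1 HG). Qed.

Lemma lcg_mulgK x y : mul (mul y x) (inv x) = y.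
Proof. by rewrite -(lcg_mulA HG) (lcg_mulVr HG) (lcg_mul1r HG). Qed.

Lemma lcg_mulgKV x y : mul (mul y (inv x)) x = y.
Proof. by rewrite -(lcg_mulA HG) (lcg_mulV HG) (lcg_mul1r HG). Qed.

Lemma continuous_mull a : continuous (mul a).
Proof.
move=> x; apply: (@continuous_comp _ _ _ (pair a) (fun p => mul p.1 p.2)).
  by apply: cvg_pair; [exact: cvg_cst | exact: cvg_id].
exact: (lcg_cont_mul HG).
Qed.

Lemma continuous_mulr a : continuous (mul^~ a).
Proof.
move=> x; apply: (@continuous_comp _ _ _ (pair^~ a) (fun p => mul p.1 p.2)).
  by apply: cvg_pair; [exact: cvg_id | exact: cvg_cst].
exact: (lcg_cont_mul HG).
Qed.

Lemma continuous_invmulr a : continuous (fun z => mul (inv z) a).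
Proof.
move=> x; apply: (@continuous_comp _ _ _ inv (mul^~ a)).
  exact: (lcg_cont_inv HG).
exact: continuous_mulr.
Qed.

Lemma image_mull x (A : set G) : mul x @` A = mul (inv x) @^-1` A.
Proof.
apply/seteqP; split => [_ [q Aq <-] | z Az] /=; first by rewrite lcg_mulKg.
by exists (mul (inv x) z); rewrite ?lcg_mulKVg.
Qed.

Lemma preimage_mull x (A : set G) : mul x @^-1` A = mul (inv x) @` A.
Proof.
apply/seteqP; split => [z Az | _ [q Aq <-]] /=; last by rewrite lcg_mulKVg.
by exists (mul x z); rewrite ?lcg_mulKg.
Qed.

Lemma image_mulr x (A : set G) : mul^~ x @` A = mul^~ (inv x) @^-1` A.
Proof.
apply/seteqP; split => [_ [q Aq <-] | z Az] /=; first by rewrite lcg_mulgK.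
by exists (mul z (inv x)); rewrite ?lcg_mulgKV.
Qed.

Lemma open_image_mull x {A : set G} : open A -> open (mul x @` A).
Proof. by rewrite image_mull; move/continuousP: (continuous_mull (inv x)); apply. Qed.

Lemma open_image_mulr x {A : set G} : open A -> open (mul^~ x @` A).
Proof. by rewrite image_mulr; move/continuousP: (continuous_mulr (inv x)); apply. Qed.

End group_translations.

Section borel_measurability.
Context {R : realType} {G : ptopologicalType}.

Lemma open_measurable_Borel {A : set G} : open A -> measurable (A : set (Borel G)).
Proof. exact: sub_sigma_algebra. Qed.

Lemma continuous_measurable_Borel {f : G -> G} :
  continuous f -> measurable_fun setT (f : Borel G -> Borel G).
Proof.
move=> /continuousP cf; apply: (@measurability _ _ _ (Borel G) _ _ (@open G) erefl).
move=> _ [B oB <-]; apply: measurableI => //.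
by apply: open_measurable_Borel; exact: cf.
Qed.

Lemma continuous_measurable_real {f : G -> R} :
  continuous f -> measurable_fun (setT : set (Borel G)) f.
Proof.
move=> /continuousP cf; apply: (measurability _ (RGenOInfty.measurableE R)).
move=> _ [_ [a ->] <-]; apply: measurableI => //.
by apply: open_measurable_Borel; apply: cf; exact: interval_open.
Qed.

Lemma lower_semicontinuous_measurable_Borel (h : G -> \bar R) :
  (forall r : R, open [set x | (r%:E < h x)%E]) ->
  measurable_fun (setT : set (Borel G)) h.
Proof.
move=> oh; apply: (measurability _ (ErealGenOInfty.measurableE R)).
move=> _ [_ [a ->] <-]; apply: measurableI => //.
by apply: open_measurable_Borel; rewrite preimage_itvoy; exact: oh.
Qed.

End borel_measurability.

Section complex_modulus.
Context {R : realType}.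

Lemma csq_ge0 (z : Cx R) : 0 <= csq z.
Proof. by rewrite addr_ge0 // sqr_ge0. Qed.

Lemma cabs_ge0 (z : Cx R) : 0 <= cabs z.
Proof. exact: sqrtr_ge0. Qed.

Lemma sqr_cabs (z : Cx R) : cabs z ^+ 2 = csq z.
Proof. by rewrite sqr_sqrtr // csq_ge0. Qed.

Lemma cabs_mul_le_csqD (z1 z2 : Cx R) : cabs z1 * cabs z2 <= csq z1 + csq z2.
Proof.
rewrite -(sqr_cabs z1) -(sqr_cabs z2).
have := cabs_ge0 z1; have := cabs_ge0 z2; nra.
Qed.

Lemma ler_dot2 (u v p q : R) :
  u * p + v * q <= Num.sqrt (u ^+ 2 + v ^+ 2) * Num.sqrt (p ^+ 2 + q ^+ 2).
Proof.
rewrite -sqrtrM ?addr_ge0 ?sqr_ge0 //; apply: le_trans (ler_norm _) _.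
rewrite -sqrtr_sqr ler_sqrt ?mulr_ge0 ?addr_ge0 ?sqr_ge0 //.
have := sqr_ge0 (u * q - v * p); nra.
Qed.

End complex_modulus.

Section square_integrable.
Context {R : realType} {G : ptopologicalType}.
Variable mu : {measure set (Borel G) -> \bar R}.
Local Notation integrable h := (mu.-integrable setT (EFin \o h)).
Local Notation measurable_fun h := (measurable_fun (setT : set (Borel G)) h).

Lemma integrable_le {h b : G -> R} :
  measurable_fun h -> integrable b -> (forall x, `|h x| <= b x) -> integrable h.
Proof.
move=> mh ib hb; apply: le_integrable ib => //; first exact/measurable_EFinP.
by move=> x _; rewrite /comp !abse_EFin lee_fin (le_trans (hb x)) ?ler_norm.
Qed.

Lemma integrableZ {h : G -> R} (c : R) : integrable h -> integrable (fun x => c * h x).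
Proof. by move=> ih; apply: eq_integrable (integrableZl measurableT c ih). Qed.

Lemma integrableD_real {h1 h2 : G -> R} :
  integrable h1 -> integrable h2 -> integrable (fun x => h1 x + h2 x).
Proof. by move=> i1 i2; apply: eq_integrable (integrableD measurableT i1 i2). Qed.

Section in_L2.
Context {f : G -> Cx R}.
Hypothesis hf : in_L2 mu f.

Lemma measurable_Re : measurable_fun (fun x => complex.Re (f x)).
Proof. by case: hf. Qed.

Lemma measurable_Im : measurable_fun (fun x => complex.Im (f x)).
Proof. by case: hf. Qed.

Lemma measurable_csq : measurable_fun (fun x => csq (f x)).
Proof.
by apply: measurable_funD; apply: measurable_funX;
  [exact: measurable_Re | exact: measurable_Im].
Qed.

Lemma measurable_cabs : measurable_fun (fun x => cabs (f x)).
Proof.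
exact: measurableT_comp (continuous_measurable_fun (@sqrt_continuous R)) measurable_csq.
Qed.

Lemma integrable_csq : integrable (fun x => csq (f x)).
Proof.
apply/integrableP; split; first by apply/measurable_EFinP; exact: measurable_csq.
under eq_integral do rewrite /comp abse_EFin ger0_norm ?csq_ge0 //.
by case: hf.
Qed.

End in_L2.

Lemma integrable_cabs_mul {f g : G -> Cx R} : in_L2 mu f -> in_L2 mu g ->
  integrable (fun x => cabs (f x) * cabs (g x)).
Proof.
move=> hf hg.
apply: (integrable_le _ (integrableD_real (integrable_csq hf) (integrable_csq hg))).
  by apply: measurable_funM; exact: measurable_cabs.
by move=> x; rewrite ger0_norm ?mulr_ge0 ?cabs_ge0 // cabs_mul_le_csqD.
Qed.

(* [ip f g] is the complex number [\int p + i \int q], and [p^2 + q^2 = |f|^2 |g|^2]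
   pointwise; Cauchy-Schwarz in R^2 then gives [|<f,g>|^2 <= |<f,g>| \int |f||g|]. *)
Lemma csq_ip_le {f g : G -> Cx R} : in_L2 mu f -> in_L2 mu g ->
  csq (ip mu f g) <= (\int[mu]_x (cabs (f x) * cabs (g x))) ^+ 2.
Proof.
move=> hf hg.
set p := fun x =>
  complex.Re (f x) * complex.Re (g x) + complex.Im (f x) * complex.Im (g x).
set q := fun x =>
  complex.Im (f x) * complex.Re (g x) - complex.Re (f x) * complex.Im (g x).
set ab := fun x => cabs (f x) * cabs (g x).
set u := \int[mu]_x p x; set v := \int[mu]_x q x; set X := \int[mu]_x ab x.
set s := Num.sqrt (u ^+ 2 + v ^+ 2).
have ab_sqrt x : ab x = Num.sqrt (p x ^+ 2 + q x ^+ 2).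
  have -> : p x ^+ 2 + q x ^+ 2 = csq (f x) * csq (g x) by rewrite /p /q /csq; ring.
  by rewrite sqrtrM ?csq_ge0.
have ab0 x : 0 <= ab x by rewrite mulr_ge0 ?cabs_ge0.
have p_le x : `|p x| <= ab x.
  by rewrite ab_sqrt -sqrtr_sqr ler_sqrt ?addr_ge0 ?sqr_ge0 // lerDl sqr_ge0.
have q_le x : `|q x| <= ab x.
  by rewrite ab_sqrt -sqrtr_sqr ler_sqrt ?addr_ge0 ?sqr_ge0 // lerDr sqr_ge0.
have ab_int : integrable ab := integrable_cabs_mul hf hg.
have p_int : integrable p.
  apply: integrable_le ab_int p_le.
  by apply: measurable_funD; apply: measurable_funM;
    solve [exact: measurable_Re | exact: measurable_Im].
have q_int : integrable q.
  apply: integrable_le ab_int q_le.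
  by apply: measurable_funB; apply: measurable_funM;
    solve [exact: measurable_Re | exact: measurable_Im].
have key : u ^+ 2 + v ^+ 2 <= s * X.
  have -> : u ^+ 2 + v ^+ 2 = \int[mu]_x (u * p x + v * q x).
    by rewrite RintegralD ?RintegralZl //; exact: integrableZ.
  rewrite /X -RintegralZl //; apply: le_Rintegral => //.
  - by apply: integrableD_real; exact: integrableZ.
  - exact: integrableZ.
  - by move=> x _; rewrite ab_sqrt; exact: ler_dot2.
have s0 : 0 <= s := sqrtr_ge0 _.
have ss : s ^+ 2 = u ^+ 2 + v ^+ 2 by rewrite sqr_sqrtr // addr_ge0 // sqr_ge0.
change (u ^+ 2 + v ^+ 2 <= X ^+ 2); rewrite -ss; rewrite -ss in key; nra.
Qed.

(* AM-GM: [2 t a k <= t^2 a^2 k + k], integrated and taken at [t = C / \int a k]. *)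
Lemma sqr_Rintegral_mul_le (a k : G -> R) (C : R) : 0 < C ->
  (forall x, 0 <= a x) -> (forall x, 0 <= k x) ->
  integrable (fun x => a x * k x) -> integrable (fun x => a x ^+ 2 * k x) ->
  integrable k -> \int[mu]_x k x <= C ->
  (\int[mu]_x (a x * k x)) ^+ 2 <= C * \int[mu]_x (a x ^+ 2 * k x).
Proof.
move=> C0 a0 k0 iak ia2k ik kC.
set X := \int[mu]_x (a x * k x); set A := \int[mu]_x (a x ^+ 2 * k x).
have amgm t : 0 < t -> 2 * t * X <= t ^+ 2 * A + \int[mu]_x k x.
  move=> t0; rewrite /X /A -!RintegralZl // -RintegralD //; last exact: integrableZ.
  apply: le_Rintegral => //; first exact: integrableZ.
    by apply: integrableD_real => //; exact: integrableZ.
  by move=> x _; have := mulr_ge0 (k0 x) (sqr_ge0 (t * a x - 1)); nra.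
have [->|X_neq0] := eqVneq X 0.
  rewrite expr0n /=; apply: mulr_ge0; first exact: ltW.
  by apply: Rintegral_ge0 => x _; rewrite mulr_ge0 ?sqr_ge0.
have X_gt0 : 0 < X.
  rewrite lt_neqAle eq_sym X_neq0 /= /X.
  by apply: Rintegral_ge0 => x _; rewrite mulr_ge0.
have := amgm (C / X) (divr_gt0 C0 X_gt0).
rewrite (_ : 2 * (C / X) * X = 2 * C); last by field.
move=> amgm_C; have {amgm_C} C_le : C <= (C / X) ^+ 2 * A by lra.
rewrite -(ler_pM2l C0) (_ : C * (C * A) = (C / X) ^+ 2 * A * X ^+ 2); last by field.
by rewrite ler_wpM2r ?sqr_ge0.
Qed.

Lemma csq_ip_le_weighted (f g : G -> Cx R) (C : R) :
  in_L2 mu f -> in_L2 mu g -> 0 < C ->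
  integrable (fun x => cabs (g x)) -> \int[mu]_x cabs (g x) <= C ->
  integrable (fun x => csq (f x) * cabs (g x)) ->
  csq (ip mu f g) <= C * \int[mu]_x (csq (f x) * cabs (g x)).
Proof.
move=> hf hg C0 ig gC ifg; apply: le_trans (csq_ip_le hf hg) _.
under [X in _ <= C * X]eq_Rintegral do rewrite -sqr_cabs.
apply: sqr_Rintegral_mul_le => // [x|x||]; rewrite ?cabs_ge0 //.
  exact: integrable_cabs_mul.
by under eq_fun do rewrite sqr_cabs.
Qed.

Lemma fsum_Rintegral_le (I : choiceType) (F : set I) (a : G -> R)
    (k : I -> G -> R) (C : R) : finite_set F -> 0 <= C ->
  measurable_fun a -> (forall x, 0 <= a x) ->
  (forall i, measurable_fun (k i)) -> (forall i x, 0 <= k i x) ->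
  (forall i, integrable (fun x => a x * k i x)) ->
  (forall x, \sum_(i \in F) k i x <= C) ->
  (\sum_(i \in F) (\int[mu]_x (a x * k i x))%:E <= C%:E * \int[mu]_x (a x)%:E)%E.
Proof.
move=> fF C0 ma a0 mk k0 iak kC.
have mak i : measurable_fun (fun x => a x * k i x) by exact: measurable_funM.
under eq_fsbigr => i _ do
  rewrite /Rintegral fineK ?(integrable_fin_num measurableT (iak i)) //.
rewrite -ge0_integral_fsum //; last 2 first.
- by move=> i; apply/measurable_EFinP.
- by move=> i x _; rewrite lee_fin mulr_ge0.
rewrite -ge0_integralZl //; last 2 first.
- by apply/measurable_EFinP.
- by move=> x _; rewrite lee_fin.
apply: ge0_le_integral => //.
- by move=> x _; apply: fsume_ge0 => i _; rewrite lee_fin mulr_ge0.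
- by apply: emeasurable_fsum => // i; apply/measurable_EFinP.
- by apply: measurable_funeM; apply/measurable_EFinP.
- move=> x _; rewrite fsumEFin // -mulr_fsumr -EFinM lee_fin mulrC.
  exact: ler_wpM2r.
Qed.

Lemma bessel_schur_test (I : choiceType) (g : I -> G -> Cx R) (C1 C2 : R) :
  0 <= C1 -> 0 < C2 -> (forall i, in_L2 mu (g i)) ->
  (forall i, integrable (fun x => cabs (g i x))) ->
  (forall i, \int[mu]_x cabs (g i x) <= C2) ->
  (forall x (F : set I), finite_set F -> \sum_(i \in F) cabs (g i x) <= C1) ->
  forall f, in_L2 mu f ->
  (\esum_(i in [set: I]) (csq (ip mu f (g i)))%:E <= (C2 * C1)%:E * l2sq mu f)%E.
Proof.
move=> C10 C20 hg ig Cg rowsum f hf.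
have g_le i x : cabs (g i x) <= C1.
  by have := rowsum x [set i] (finite_set1 i); rewrite fsbig_set1.
have ifg i : integrable (fun x => csq (f x) * cabs (g i x)).
  apply: (integrable_le _ (integrableZ C1 (integrable_csq hf))) => [|x].
    by apply: measurable_funM; [exact: measurable_csq | exact: measurable_cabs].
  by rewrite ger0_norm ?mulr_ge0 ?csq_ge0 ?cabs_ge0 // mulrC ler_wpM2r ?csq_ge0.
apply: ge_ereal_sup => _ [F [fF _] <-].
apply: (@le_trans _ _
    (\sum_(i \in F) C2%:E * (\int[mu]_x (csq (f x) * cabs (g i x)))%:E)%E).
  apply: lee_fsum => // i _; rewrite -EFinM lee_fin.
  exact: csq_ip_le_weighted.
rewrite -ge0_mule_fsumr => [|i]; last first.
  by rewrite lee_fin Rintegral_ge0 // => x _; rewrite mulr_ge0 ?csq_ge0 ?cabs_ge0.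
rewrite EFinM -muleA; apply: lee_wpmul2l; first by rewrite lee_fin ltW.
rewrite /l2sq; apply: fsum_Rintegral_le => //.
- exact: measurable_csq.
- by move=> x; exact: csq_ge0.
- by move=> i; exact: measurable_cabs.
- by move=> i x; exact: cabs_ge0.
- by move=> x; exact: rowsum.
Qed.

End square_integrable.

Section haar_measure.
Context {R : realType} {G : ptopologicalType}.
Context {mul : G -> G -> G} {inv : G -> G} {e : G}.
Context {mu : {measure set (Borel G) -> \bar R}}.

Lemma loc_esssup_le (A : set G) (F : G -> \bar R) M :
  (forall y, A y -> (F y <= M)%E) -> (loc_esssup mu A F <= M)%E.
Proof.
move=> FM; apply: ereal_inf_le; exists M => //=.
rewrite (_ : _ `&` _ = set0) ?measure0 //.
by apply/seteqP; split => z // [Az] /=; rewrite ltNge FM.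
Qed.

Hypothesis HG : is_sc_lc_group mul inv e.
Hypothesis HH : is_left_haar mul mu.

(* A nonempty open set has positive Haar measure, so it cannot be ignored by
   the essential supremum. *)
Lemma loc_esssup_ge (A : set G) (F : G -> \bar R) y : A y ->
  (forall M, (M < F y)%E -> open (A `&` [set z | (M < F z)%E])) ->
  (F y <= loc_esssup mu A F)%E.
Proof.
move=> Ay oAF; apply/ereal_infP => M /= AF0; rewrite leNgt; apply/negP => MF.
by have := haar_open_pos HH (oAF M MF) (ex_intro _ y (conj Ay MF)); rewrite AF0 ltxx.
Qed.

Lemma integral_mull (a : G) (h : G -> \bar R) :
  measurable_fun (setT : set (Borel G)) h -> (forall x, (0 <= h x)%E) ->
  (\int[mu]_x h (mul a x) = \int[mu]_x h x)%E.
Proof.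
move=> mh h0.
have ma := continuous_measurable_Borel (continuous_mull HG a).
have := ge0_integral_pushforward ma mu measurableT mh (fun y _ => h0 y).
rewrite preimage_setT => <-; apply: eq_measure_integral => A mA _.
change (mu (mul a @^-1` A) = mu A).
by rewrite (preimage_mull HG) (haar_left_inv HH).
Qed.

Section window.
Context {Q : set G}.
Hypothesis HQ : is_window inv e Q.

Let oQ : open Q. Proof. by case: HQ. Qed.
Let Qe : Q e. Proof. by case: HQ. Qed.

Lemma measure_window_gt0 : (0 < mu Q)%E.
Proof. by apply: (haar_open_pos HH oQ); exists e. Qed.

Lemma measure_window_lt_pinfty : (mu Q < +oo)%E.
Proof.
have mcl : measurable (closure Q : set (Borel G)).
  rewrite -[closure Q]setCK; apply: measurableC; apply: open_measurable_Borel.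
  by rewrite openC; exact: closed_closure.
apply: le_lt_trans (haar_compact_finite HH (_ : compact (closure Q))); last by case: HQ.
apply: le_measure; rewrite ?inE //; last exact: subset_closure.
exact: open_measurable_Borel.
Qed.

Context {Phi : G -> R}.
Hypothesis Phi0 : forall x, 0 <= Phi x.
Hypothesis Phic : continuous Phi.

Local Notation H := (maxQ mul mu Q Phi).

Lemma maxQ_ge x q : Q q -> ((Phi (mul x q))%:E <= H x)%E.
Proof.
move=> Qq; rewrite -[X in (X%:E <= _)%E]ger0_norm //.
apply: loc_esssup_ge; first by exists q.
have oxQ := open_image_mull HG x oQ.
case=> [r | | ] // _.
- apply: openI => //.
  rewrite (_ : [set z | _] = Phi @^-1` [set t | r < t]).
    by move/continuousP: Phic; apply; exact: open_gt.
  by apply/seteqP; split => z /=; rewrite lte_fin ger0_norm.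
- rewrite (_ : [set z | _] = setT) ?setIT //.
  by apply/seteqP; split => z //= _; rewrite ltNye.
Qed.

Lemma maxQ_ge0 x : (0 <= H x)%E.
Proof. by apply: le_trans (maxQ_ge x e Qe); rewrite lee_fin. Qed.

(* If [r < H x], then [r < Phi y] for some [y] in [xQ]; the condition [y \in x'Q]
   is open in [x'], and [H x' >= Phi y] there. *)
Lemma open_maxQ_gt (r : R) : open [set x | (r%:E < H x)%E].
Proof.
rewrite openE => x /= rH.
have [q Qq rq] : exists2 q, Q q & (r%:E < (`|Phi (mul x q)|)%:E)%E.
  apply: contrapT => rPhi; move: rH; apply/negP; rewrite -leNgt.
  apply: loc_esssup_le => _ [q Qq <-]; rewrite leNgt; apply/negP => rq.
  by apply: rPhi; exists q.
have oU : open [set x' | Q (mul (inv x') (mul x q))].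
  by move/continuousP: (continuous_invmulr HG (mul x q)); apply.
have Ux : Q (mul (inv x) (mul x q)) by rewrite (lcg_mulKg HG).
apply: filterS (open_nbhs_nbhs (conj oU Ux)) => x' /= Qx'.
apply: lt_le_trans rq _; rewrite ger0_norm //.
by have := maxQ_ge x' _ Qx'; rewrite (lcg_mulKVg HG).
Qed.

Lemma measurable_maxQ : measurable_fun (setT : set (Borel G)) H.
Proof. by apply: lower_semicontinuous_measurable_Borel; exact: open_maxQ_gt. Qed.

Lemma maxQ_le_maxQR x : (H x <= maxQR mul mu Q H x)%E.
Proof.
have oQx := open_image_mulr HG x oQ.
apply: loc_esssup_ge; first by exists e; rewrite ?(lcg_mul1 HG).
case=> [r _ | | _]; first exact: openI (open_maxQ_gt r).
  by rewrite ltNge leey.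
rewrite (_ : [set z | _] = setT) ?setIT //.
by apply/seteqP; split => z //= _; apply: lt_le_trans (maxQ_ge0 z); exact: ltNyr.
Qed.

Lemma integral_Phi_mull_le a :
  (\int[mu]_x (Phi (mul a x))%:E <= \int[mu]_x H x)%E.
Proof.
have mPhi : measurable_fun (setT : set (Borel G)) (fun x => (Phi x)%:E).
  by apply/measurable_EFinP; exact: continuous_measurable_real.
rewrite (integral_mull a _ mPhi) => [|y]; last by rewrite lee_fin.
apply: ge0_le_integral => //.
- by move=> y _; rewrite lee_fin.
- exact: measurable_maxQ.
- by move=> y _; have := maxQ_ge y e Qe; rewrite (lcg_mul1r HG).
Qed.

Lemma integral_maxQ_lt_pinfty {w} :
  admissible_weight mul w -> in_Wiener mul mu Q w Phi -> (\int[mu]_x H x < +oo)%E.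
Proof.
move=> [_ w_ge1 _] [_ mW W_fin]; apply: le_lt_trans W_fin.
apply: ge0_le_integral => //.
- by move=> x _; exact: maxQ_ge0.
- exact: measurable_maxQ.
- move=> x _; apply: le_trans (maxQ_le_maxQR x) _.
  apply: lee_pemull; last by rewrite lee_fin.
  exact: le_trans (maxQ_ge0 x) (maxQ_le_maxQR x).
Qed.

Hypothesis H_fin : (\int[mu]_x H x < +oo)%E.

Let integral_H_fin_num : (\int[mu]_x H x)%E \is a fin_num.
Proof. by rewrite ge0_fin_numE // integral_ge0 // => x _; exact: maxQ_ge0. Qed.

Lemma integrable_Phi_mull a : mu.-integrable setT (EFin \o (fun x => Phi (mul a x))).
Proof.
apply/integrableP; split.
  apply/measurable_EFinP; apply: continuous_measurable_real => x.
  exact: continuous_comp (continuous_mull HG a x) (Phic _).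
under eq_integral do rewrite /comp abse_EFin ger0_norm //.
exact: le_lt_trans (integral_Phi_mull_le a) H_fin.
Qed.

Lemma Rintegral_Phi_mull_le a :
  \int[mu]_x Phi (mul a x) <= fine (\int[mu]_x H x)%E.
Proof.
apply: fine_le; [|exact: integral_H_fin_num|exact: integral_Phi_mull_le].
exact (integrable_fin_num measurableT (integrable_Phi_mull a)).
Qed.

Context {I : choiceType} {Lam : I -> G} {N : nat}.
Hypothesis HN : forall x, ([set i | (mul x @` Q) (Lam i)] #<= [set: 'I_N])%card.

Let Qsym {q} : Q q -> Q (inv q).
Proof. by case: HQ => _ _ sQ _ Qq; rewrite -sQ; exists q. Qed.

(* By symmetry of [Q], [z] lies in [Lam i Q] iff [Lam i] lies in [z Q]. *)
Lemma fsum_patch_translates_le z (F : set I) (h : G -> \bar R) :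
  finite_set F -> (forall y, (0 <= h y)%E) ->
  (\sum_(i \in F) (h \_ (mul (Lam i) @` Q)) z <= N%:R%:E * h z)%E.
Proof.
move=> fF h0; set S := [set i | (mul z @` Q) (Lam i)].
have SN : (S #<= `I_N)%card.
  by apply: card_le_trans (HN z) _; case/card_eqPle: (@card_II N).
have fS : finite_set S by apply/finite_set_leP; exists N.
apply: (@le_trans _ _ (\sum_(i \in F) (if i \in S then h z else 0))%E).
  apply: lee_fsum => // i _; rewrite /patch.
  case: ifPn => [/set_mem [q Qq zE] | _]; last by case: ifPn.
  have Si : S i by exists (inv q); [exact: Qsym | rewrite -zE (lcg_mulgK HG)].
  by rewrite mem_set.
rewrite -fsbig_mkcondr; apply: (@le_trans _ _ (\sum_(i \in S) h z)%E).
  apply: lee_fsum_nneg_subset => //; first exact: finite_setIl.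
  by move=> i; rewrite !inE => -[].
rewrite fsbig_finite // big_const_seq count_predT iter_addr_0.
have natmulE n : (h z *+ n)%R = (n%:R%:E * h z)%E by exact: esym (mule_natl _ _).
rewrite natmulE.
by apply: lee_wpmul2r => //; rewrite lee_fin ler_nat; exact: geq_card_fset_set.
Qed.

Lemma fsum_Phi_le x {F : set I} : finite_set F ->
  (mu Q * \sum_(i \in F) (Phi (mul (inv x) (Lam i)))%:E <= N%:R%:E * \int[mu]_z H z)%E.
Proof.
move=> fF; set hx := fun z => H (mul (inv x) z).
have mhx : measurable_fun (setT : set (Borel G)) hx.
  apply: measurableT_comp measurable_maxQ _.
  exact: continuous_measurable_Borel (continuous_mull HG _).
have hx0 y : (0 <= hx y)%E by exact: maxQ_ge0.
have mQ : measurable (Q : set (Borel G)) := open_measurable_Borel oQ.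
have mLQ i : measurable (mul (Lam i) @` Q : set (Borel G)).
  exact: open_measurable_Borel (open_image_mull HG _ oQ).
rewrite ge0_mule_fsumr => [|i]; last by rewrite lee_fin.
apply: (@le_trans _ _ (\sum_(i \in F) \int[mu]_z (hx \_ (mul (Lam i) @` Q)) z)%E).
  apply: lee_fsum => // i _; rewrite -integral_mkcond.
  rewrite -(haar_left_inv HH (Lam i) mQ) muleC -integral_cst //.
  apply: ge0_le_integral => //.
  - by move=> y _; rewrite lee_fin.
  - exact: measurable_funS mhx.
  - move=> _ [q Qq <-]; have := maxQ_ge (mul (inv x) (mul (Lam i) q)) _ (Qsym Qq).
    by rewrite -!(lcg_mulA HG) (lcg_mulVr HG) (lcg_mul1r HG).
rewrite -ge0_integral_fsum //; last 2 first.
- by move=> i; apply/(measurable_restrictT _ (mLQ i)); exact: measurable_funS mhx.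
- by move=> i y _; rewrite /patch; case: ifPn.
apply: (@le_trans _ _ (\int[mu]_z (N%:R%:E * hx z))%E).
  apply: ge0_le_integral => //.
  - by move=> y _; apply: fsume_ge0 => i _; rewrite /patch; case: ifPn.
  - apply: emeasurable_fsum => // i.
    by apply/(measurable_restrictT _ (mLQ i)); exact: measurable_funS mhx.
  - exact: measurable_funeM.
  - by move=> y _; exact: fsum_patch_translates_le.
by rewrite ge0_integralZl // (integral_mull (inv x) _ measurable_maxQ maxQ_ge0).
Qed.

Lemma fsum_Phi_le_real x {F : set I} : finite_set F ->
  \sum_(i \in F) Phi (mul (inv x) (Lam i)) <=
    N%:R * fine (\int[mu]_z H z)%E / fine (mu Q).
Proof.
move=> fF; have := fsum_Phi_le x fF.
have Q_fin : mu Q \is a fin_num.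
  by rewrite ge0_fin_numE ?measure_window_lt_pinfty // ltW // measure_window_gt0.
have Q_gt0 : 0 < fine (mu Q).
  by rewrite fine_gt0 // measure_window_gt0 measure_window_lt_pinfty.
rewrite fsumEFin // -(fineK Q_fin) -(fineK integral_H_fin_num) -!EFinM lee_fin.
by rewrite ler_pdivlMr // mulrC.
Qed.

Context {g : I -> G -> Cx R}.
Hypothesis g_le : forall i x,
  cabs (g i x) <= Num.min (Phi (mul (inv (Lam i)) x)) (Phi (mul (inv x) (Lam i))).

Let g_le_l i x : cabs (g i x) <= Phi (mul (inv (Lam i)) x).
Proof. by have := g_le i x; rewrite le_min => /andP[]. Qed.

Let g_le_r i x : cabs (g i x) <= Phi (mul (inv x) (Lam i)).
Proof. by have := g_le i x; rewrite le_min => /andP[]. Qed.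

Lemma integrable_molecule i : in_L2 mu (g i) ->
  mu.-integrable setT (EFin \o (fun x => cabs (g i x))).
Proof.
move=> gL2; apply: integrable_le (integrable_Phi_mull (inv (Lam i))) _ => [|x].
  exact: measurable_cabs gL2.
by rewrite ger0_norm ?cabs_ge0.
Qed.

Lemma Rintegral_molecule_le i : in_L2 mu (g i) ->
  \int[mu]_x cabs (g i x) <= fine (\int[mu]_x H x)%E.
Proof.
move=> gL2; apply: le_trans (Rintegral_Phi_mull_le (inv (Lam i))).
apply: le_Rintegral; first exact: measurableT.
- exact: integrable_molecule.
- exact: integrable_Phi_mull.
- by move=> x _; exact: g_le_l.
Qed.

Lemma fsum_molecule_le x {F : set I} : finite_set F ->
  \sum_(i \in F) cabs (g i x) <= N%:R * fine (\int[mu]_z H z)%E / fine (mu Q).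
Proof.
move=> fF; apply: le_trans (fsum_Phi_le_real x fF).
rewrite -lee_fin -!fsumEFin //; apply: lee_fsum => // i _.
by rewrite lee_fin g_le_r.
Qed.

Lemma bessel_molecules : (forall i, in_L2 mu (g i)) ->
  exists2 B : R, 0 < B & forall f, in_L2 mu f ->
    (\esum_(i in [set: I]) (csq (ip mu f (g i)))%:E <= B%:E * l2sq mu f)%E.
Proof.
move=> gL2; set cH := fine (\int[mu]_x H x)%E; set C1 := N%:R * cH / fine (mu Q).
have cH_ge0 : 0 <= cH.
  by apply: fine_ge0; apply: integral_ge0 => x _; exact: maxQ_ge0.
have C1_ge0 : 0 <= C1.
  by apply: divr_ge0; [exact: mulr_ge0 | apply: fine_ge0; exact: measure_ge0].
exists ((cH + 1) * (C1 + 1)); first by rewrite mulr_gt0 ?ltr_wpDl.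
move=> f hf; apply: bessel_schur_test hf => //.
- by rewrite addr_ge0.
- by rewrite ltr_wpDl.
- by move=> i; exact: integrable_molecule.
- by move=> i; apply: le_trans (Rintegral_molecule_le i (gL2 i)) _; rewrite lerDl.
- by move=> x F fF; apply: le_trans (fsum_molecule_le x fF) _; rewrite lerDl.
Qed.

End window.
End haar_measure.

Theorem lemma4p8 (R : realType) (G : ptopologicalType)
  (mul : G -> G -> G) (inv : G -> G) (e : G)
  (mu : {measure set (Borel G) -> \bar R}) (Q : set G)
  (K : set (G -> Cx R)) (I : choiceType) (Lam : I -> G)
  (w : G -> R) (g : I -> G -> Cx R) :
  is_sc_lc_group mul inv e ->
  is_left_haar mul mu ->
  is_window inv e Q ->
  is_RKHS mu K ->
  rel_separated mul Q Lam ->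
  admissible_weight mul w ->
  w_molecules mul inv mu K Q w Lam g ->
  exists2 B : R, 0 < B &
    forall f, K f ->
      (\esum_(i in [set: I]) (csq (ip mu f (g i)))%:E <= B%:E * l2sq mu f)%E.
Proof.
move=> HG HH HQ HK [N HN] Hw [gK [Phi [Phi0 HW g_le]]].
have Phic : continuous Phi by case: HW.
have H_fin := integral_maxQ_lt_pinfty HG HH HQ Phi0 Phic Hw HW.
have gL2 i : in_L2 mu (g i) := rkhs_sub_L2 HK (gK i).
have [B B_gt0 bessel] := bessel_molecules HG HH HQ Phi0 Phic H_fin HN g_le gL2.
by exists B => // f Kf; exact: bessel (rkhs_sub_L2 HK Kf).
Qed.
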